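(* Let $\mathcal{AF}_{\vdash}=(\vdash,\overline{\cdot},\widehat{\cdot})$ be a setting such that $\vdash$ satisfies Cut and $\widehat{\cdot}$ is pointed. Let $\mathcal{S}\subseteq\mathcal{L}$ and $\phi\in\mathcal{L}$ with $\mathcal{S}\mathrel{\mid\!\sim}^{\mathcal{AF}_{\vdash}}_{\mathsf{Grd}}\phi$. Then: (1) there is an argument $(\Phi,\phi)\in\mathsf{Grd}(\mathcal{AF}_{\vdash}(\mathcal{S}))$; (2) $\mathsf{Grd}(\mathcal{AF}_{\vdash}(\mathcal{S}))\subseteq\mathsf{Grd}(\mathcal{AF}_{\vdash^{+\phi}}(\mathcal{S}))$; (3) $\mathsf{Grd}(\mathcal{AF}_{\vdash^{+\phi}}(\mathcal{S}))\cap\mathit{Arg}_{\vdash}(\mathcal{S})=\mathsf{Grd}(\mathcal{AF}_{\vdash}(\mathcal{S}))$; (4) with $\Phi$ as in (1), for every $a=(\Gamma,\gamma)\in\mathsf{Grd}(\mathcal{AF}_{\vdash^{+\phi}}(\mathcal{S}))\setminus\mathit{Arg}_{\vdash}(\mathcal{S})$ we have $(\Gamma\cup\Phi,\gamma)\in\mathsf{Grd}(\mathcal{AF}_{\vdash}(\mathcal{S}))$.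
   Context: $\mathcal{L}$ is a set of formulas, $\wp_{\sf fin}(X)$ the finite subsets of $X$. A setting is $(\vdash,\overline{\cdot},\widehat{\cdot})$ with ${\vdash}\subseteq\wp_{\sf fin}(\mathcal{L})\times\mathcal{L}$ arbitrary, $\overline{\cdot}:\mathcal{L}\to\wp(\mathcal{L})$, $\widehat{\cdot}$ assigning to each nonempty finite set of formulas a finite set of formulas, with $\widehat{\emptyset}=\emptyset$. $\mathit{Arg}_{\vdash}(\mathcal{S})=\{(\Gamma,\gamma):\Gamma\subseteq\mathcal{S}\text{ finite},\Gamma\vdash\gamma\}$; in $\mathcal{AF}_{\vdash}(\mathcal{S})$, $(\Gamma,\gamma)$ attacks $(\Gamma',\gamma')$ iff $\gamma\in\overline{\psi}$ for some $\psi\in\widehat{\Gamma'}$. A complete extension is a conflict-free set of arguments that defends each member (every attacker of a member is attacked by a member) and contains every argument it defends; $\mathsf{Grd}(\mathcal{AF}_{\vdash}(\mathcal{S}))$ is the $\subseteq$-minimal complete extension. $\mathcal{S}\mathrel{\mid\!\sim}^{\mathcal{AF}_{\vdash}}_{\mathsf{Grd}}\phi$ iff the grounded extension contains an argument with conclusion $\phi$. $\vdash^{+\phi}$ is the transitive closure of ${\vdash}\cup\{(\emptyset,\phi)\}$ and $\mathcal{AF}_{\vdash^{+\phi}}=(\vdash^{+\phi},\overline{\cdot},\widehat{\cdot})$. $\vdash$ satisfies Cut iff for every $\phi\in\mathcal{L}$ and all finite $\Gamma,\Delta$ and $\gamma$: if $\Gamma\vdash\phi$ and $\Delta\vdash^{+\phi}\gamma$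 then $\Gamma\cup\Delta\vdash\gamma$. $\widehat{\cdot}$ is pointed iff $\widehat{\Gamma\cup\Delta}=\widehat{\Gamma}\cup\widehat{\Delta}$ for all finite $\Gamma,\Delta$. *)

From mathcomp Require Import all_boot.
From mathcomp Require Export finmap.
Set Implicit Arguments. Unset Strict Implicit. Unset Printing Implicit Defensive.
Local Open Scope fset_scope.

Section Setting.
Variable L : choiceType.

Definition argument := ({fset L} * L)%type.

Definition Args (der : {fset L} -> L -> Prop) (S : L -> Prop) (a : argument) : Prop :=
  (forall x, x \in a.1 -> S x) /\ der a.1 a.2.

(* ctr psi gamma  means  gamma \in overline psi. *)
Definition attacks (ctr : L -> L -> Prop) (hat : {fset L} -> {fset L})
  (a b : argument) : Prop :=
  exists psi, psi \in hat b.1 /\ ctr psi a.2.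

Definition conflict_free ctr hat (E : argument -> Prop) : Prop :=
  forall a b, E a -> E b -> ~ attacks ctr hat a b.

Definition defends ctr hat (A E : argument -> Prop) (a : argument) : Prop :=
  forall b, A b -> attacks ctr hat b a -> exists c, E c /\ attacks ctr hat c b.

Definition complete_ext ctr hat (A E : argument -> Prop) : Prop :=
  [/\ (forall a, E a -> A a),
      conflict_free ctr hat E,
      (forall a, E a -> defends ctr hat A E a) &
      (forall a, A a -> defends ctr hat A E a -> E a)].

Definition grounded ctr hat (A E : argument -> Prop) : Prop :=
  complete_ext ctr hat A E /\
  forall E', complete_ext ctr hat A E' -> forall a, E a -> E' a.

Inductive plus (der : {fset L} -> L -> Prop) (phi : L) : {fset L} -> L -> Prop :=
| plus_base G g : der G g -> plus der phi G g
| plus_ax : plus der phi fset0 phi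
| plus_trans G psi D g :
    plus der phi G psi -> plus der phi D g -> psi \in D ->
    plus der phi (G `|` (D `\ psi)) g.

Definition Cut (der : {fset L} -> L -> Prop) : Prop :=
  forall phi G D g, der G phi -> plus der phi D g -> der (G `|` D) g.

Definition pointed (hat : {fset L} -> {fset L}) : Prop :=
  forall G D, hat (G `|` D) = hat G `|` hat D.

Definition grd_entails der ctr hat (S : L -> Prop) (phi : L) : Prop :=
  exists E, grounded ctr hat (Args der S) E /\ exists G, E (G, phi).

End Setting.

(** The grounded extension is the least fixed point of Dung's defense
    function, which yields an induction principle for it.  Given a grounded
    argument [(Phi, phi)], Cut turns every [|-^{+phi}]-argument [(Gam, gam)]
    into the [|-]-argument [(Gam `|` Phi, gam)] with the same conclusion, and
    since [hat] is pointed, an attack on [(Gam `|` Phi, gam)] is an attack on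
    [(Gam, gam)] or on the grounded [(Phi, phi)].  Inducting along the two
    grounded extensions then transfers membership in both directions. *)

From mathcomp Require Import all_boot finmap.
Set Implicit Arguments. Unset Strict Implicit.
Local Open Scope fset_scope.

Section GroundedInduction.
Variables (L : choiceType) (ctr : L -> L -> Prop) (hat : {fset L} -> {fset L}).
Variable A : argument L -> Prop.

Local Notation defends := (defends ctr hat A).

Lemma defends_mono (X Y : argument L -> Prop) a :
  (forall x, X x -> Y x) -> defends X a -> defends Y a.
Proof.
move=> subXY defXa b Ab attba.
have [c [Xc attcb]] := defXa b Ab attba.
by exists c; split; first exact: subXY.
Qed.

Definition lfp_defense (a : argument L) : Prop :=
  forall X : argument L -> Prop,
    (forall b, A b -> defends X b -> X b) -> X a.

Lemma lfp_defense_args a : lfp_defense a -> A a.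
Proof. by apply. Qed.

Lemma lfp_defense_closed a : A a -> defends lfp_defense a -> lfp_defense a.
Proof.
move=> Aa defa X closedX; apply: (closedX) => //.
by apply: defends_mono defa => x /(_ X closedX).
Qed.

Lemma lfp_defense_ind (P : argument L -> Prop) :
  (forall b, A b -> defends (fun x => lfp_defense x /\ P x) b -> P b) ->
  forall a, lfp_defense a -> P a.
Proof.
move=> IH a /(_ (fun x => lfp_defense x /\ P x)) lfp_a; apply: proj2; apply: lfp_a.
move=> b Ab defb; split; last exact: IH.
by apply: lfp_defense_closed => //; apply: defends_mono defb => x [].
Qed.

Lemma lfp_defense_defended a : lfp_defense a -> defends lfp_defense a.
Proof.
apply: lfp_defense_ind => b _ defb.
by apply: defends_mono defb => x [].
Qed.

Lemma lfp_defense_conflict_free : conflict_free ctr hat lfp_defense.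
Proof.
move=> a b lfp_a lfp_b; move: b lfp_b a lfp_a; apply: lfp_defense_ind.
move=> b _ defb a lfp_a attab.
have [c [[lfp_c unattacked_c] attca]] := defb a (lfp_defense_args lfp_a) attab.
have [d [lfp_d attdc]] := lfp_defense_defended lfp_a (lfp_defense_args lfp_c) attca.
exact: unattacked_c lfp_d attdc.
Qed.

Lemma lfp_defense_complete : complete_ext ctr hat A lfp_defense.
Proof.
split.
- exact: lfp_defense_args.
- exact: lfp_defense_conflict_free.
- exact: lfp_defense_defended.
- exact: lfp_defense_closed.
Qed.

Lemma grounded_lfp_defense E :
  grounded ctr hat A E -> forall a, E a <-> lfp_defense a.
Proof.
move=> [[_ _ _ closedE] minE] a; split; first exact: minE lfp_defense_complete a.
by move/(_ E closedE).
Qed.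

Lemma grounded_sub E a : grounded ctr hat A E -> E a -> A a.
Proof. by move=> [[subA _ _ _] _]; apply: subA. Qed.

Lemma grounded_ind E (P : argument L -> Prop) :
  grounded ctr hat A E ->
  (forall b, A b -> defends (fun x => E x /\ P x) b -> P b) ->
  forall a, E a -> P a.
Proof.
move=> grdE IH a /(grounded_lfp_defense grdE); apply: lfp_defense_ind.
move=> b Ab defb; apply: IH => //.
by apply: defends_mono defb => x [/(grounded_lfp_defense grdE)].
Qed.

End GroundedInduction.

(** An attack only looks at the conclusion of the attacker and at the premises
    of the attacked argument. *)
Section Attacks.
Variables (L : choiceType) (ctr : L -> L -> Prop) (hat : {fset L} -> {fset L}).

Local Notation attacks := (attacks ctr hat).

Lemma attacks_conclusion (a b c : argument L) :
  a.2 = b.2 -> attacks a c -> attacks b c.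
Proof. by rewrite /attacks => <-. Qed.

Lemma attacks_fsetU (G D : {fset L}) (g : L) (c : argument L) :
  pointed hat -> attacks c (G `|` D, g) -> attacks c (G, g) \/ attacks c (D, g).
Proof.
move=> pt [psi [/=]]; rewrite pt in_fsetU => /orP [] Hpsi ctr_psi;
  [left | right]; by exists psi.
Qed.

End Attacks.

Section CutGrounded.
Variables (L : choiceType) (der : {fset L} -> L -> Prop).
Variables (ctr : L -> L -> Prop) (hat : {fset L} -> {fset L}).
Variables (S : L -> Prop) (phi : L) (Phi : {fset L}).
Hypotheses (cut : Cut der) (pt : pointed hat).
Variables G1 G2 : argument L -> Prop.
Hypothesis grdG1 : grounded ctr hat (Args der S) G1.
Hypothesis grdG2 : grounded ctr hat (Args (plus der phi) S) G2.
Hypothesis G1Phi : G1 (Phi, phi).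

Local Notation attacks := (attacks ctr hat).

Lemma Args_plus a : Args der S a -> Args (plus der phi) S a.
Proof. by case=> inS dera; split=> //; apply: plus_base. Qed.

Lemma Args_cut Gam gam :
  Args der S (Phi, phi) -> Args (plus der phi) S (Gam, gam) ->
  Args der S (Gam `|` Phi, gam).
Proof.
move=> [PhiS derPhi] [GamS plus_gam]; split=> /=.
  by move=> x; rewrite in_fsetU => /orP [/GamS | /PhiS].
by rewrite fsetUC; apply: cut derPhi plus_gam.
Qed.

Lemma grounded_sub_plus a : G1 a -> G2 a.
Proof.
have [[_ cfG1 _ _] _] := grdG1; have [[_ _ _ closedG2] _] := grdG2.
move: a; apply: (grounded_ind grdG1) => -[Gam gam] Agam defgam.
apply: closedG2; first exact: Args_plus.
move=> [Del del] Adel attgam.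
have Acut := Args_cut (grounded_sub grdG1 G1Phi) Adel.
have [c [[G1c G2c] attc]] := defgam _ Acut (attacks_conclusion erefl attgam).
exists c; split=> //.
have [//|attPhi] := attacks_fsetU pt attc.
by have [] := cfG1 _ _ G1c G1Phi.
Qed.

Lemma defends_lift_fsetU (X : argument L -> Prop) a :
  defends ctr hat (Args (plus der phi) S) X a ->
  (forall c, X c -> G1 (c.1 `|` Phi, c.2)) ->
  forall d, Args der S d -> attacks d a -> exists c, G1 c /\ attacks c d.
Proof.
move=> defa liftX d Ad attda.
have [c [Xc attcd]] := defa d (Args_plus Ad) attda.
by exists (c.1 `|` Phi, c.2); split; [exact: liftX | exact: attacks_conclusion attcd].
Qed.

Lemma grounded_plus_fsetU a : G2 a -> G1 (a.1 `|` Phi, a.2).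
Proof.
have [[_ _ defG1 closedG1] _] := grdG1.
move: a; apply: (grounded_ind (P := fun a => G1 (a.1 `|` Phi, a.2)) grdG2).
move=> [Del del] Adel defdel.
apply: closedG1; first exact: Args_cut (grounded_sub grdG1 G1Phi) Adel.
move=> d Ad attd.
have [attDel|attPhi] := attacks_fsetU pt attd.
  by apply: (defends_lift_fsetU defdel _ Ad attDel) => c [].
exact: defG1 G1Phi d Ad attPhi.
Qed.

Lemma grounded_plus_args a : G2 a -> Args der S a -> G1 a.
Proof.
have [[_ _ defG2 _] _] := grdG2; have [[_ _ _ closedG1] _] := grdG1.
move=> G2a Aa; apply: closedG1 => //.
apply: (defends_lift_fsetU (defG2 _ G2a)).
exact: grounded_plus_fsetU.
Qed.

End CutGrounded.

Theorem theorem4 (L : choiceType) (der : {fset L} -> L -> Prop)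
  (ctr : L -> L -> Prop) (hat : {fset L} -> {fset L})
  (hat0 : hat fset0 = fset0)
  (Hcut : Cut der) (Hpt : pointed hat)
  (S : L -> Prop) (phi : L)
  (G1 G2 : argument L -> Prop)
  (HG1 : grounded ctr hat (Args der S) G1)
  (HG2 : grounded ctr hat (Args (plus der phi) S) G2)
  (Hent : grd_entails der ctr hat S phi) :
  (exists Phi, G1 (Phi, phi)) /\
  (forall a, G1 a -> G2 a) /\
  (forall a, (G2 a /\ Args der S a) <-> G1 a) /\
  (forall Phi, G1 (Phi, phi) ->
     forall Gam gam, G2 (Gam, gam) -> ~ Args der S (Gam, gam) ->
       G1 (Gam `|` Phi, gam)).
Proof.
have [Phi G1Phi] : exists Phi, G1 (Phi, phi).
  have [E [[_ minE] [Phi EPhi]]] := Hent.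
  by exists Phi; apply: minE (HG1.1) _ EPhi.
have sub12 := grounded_sub_plus Hcut Hpt HG1 HG2 G1Phi.
split; first by exists Phi.
split=> //; split.
  move=> a; split.
    by move=> [G2a Aa]; apply: (grounded_plus_args Hcut Hpt HG1 HG2 G1Phi G2a Aa).
  by move=> G1a; split; [exact: sub12 | exact: grounded_sub HG1 G1a].
move=> Phi' G1Phi' Gam gam G2gam _.
exact: (grounded_plus_fsetU Hcut Hpt HG1 HG2 G1Phi' G2gam).
Qed.
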